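(* In the algorithm CertifiedCurveTracking (described in the context), the updated point $\hat x=(X(h),\hat x_n+h)$, formed after the inner step-size loop exits, is a $\tau$-approximate solution to $\hat C$.
   Context: Setting: $C=\{c_1,\dots,c_{n-1}\}\subset\mathbb{Q}[X_1,\dots,X_n]$ defines a regular real curve (Jacobian of full rank at every point, no self-intersections). For a value or interval $a$, $C_a$ is the square system $(c_i(X_1,\dots,X_{n-1},a))_i$; $x_{-n}=(x_1,\dots,x_{n-1})$; $B=[-1,1]^{n-1}$. KrawczykTest$(F,y,s,A,\rho)$ returns True iff $\|-\frac1sAF(y)+(I-A\square JF(y+sB))B\|<\rho$, computed in interval arithmetic (with $\square$ an interval extension and $\|\cdot\|$ the maximal magnitude/induced $\infty$-norm over intervals), evaluated simultaneously over interval slice values and interval points when these are intervals. A point $x\in\mathbb{R}^n$ is a $\tau$-approximate solution to a curve $\hat C$ if there exist an invertible matrix $A$ and $r>0$ such that $-A\hat C_{x_n}(x_{-n})+(I-A\,J\hat C_{x_n}(x_{-n}+rB))rB\subset r\tau B$. In CertifiedCurveTracking (inputs: curve $C$, point, $r>0$, $h>0$, compact $D$, $\rho\in(0,\frac12]$, $\tau\in(\frac12,1)$), at each step one obtains a transformed curve $\hat C(X)=U^*C(VX)$ (from an SVD of the Jacobian), a point $\hat x$, radius $r$ and matrix $A$ from a refinement procedure; a predictor $X(\eta)$ ($\eta\ge0$, user-chosen, continuous, $X(0)=\hat x_{-n}$) is extended by $\hat X(\eta)=\hat x_{-n}$ for $\eta<0$, $\hat X(\eta)=X(\eta)$ for $\eta\ge0$;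 the step size $h$ is halved (and the predictor recomputed) until KrawczykTest$(\hat C_{\hat x_n+[-r\rho,h]},\hat X([-r\rho,h]),r,A,\tau)$ returns True; then one sets $\hat x=(X(h),\hat x_n+h)$. *)

From HB Require Import structures.
From mathcomp Require Import all_boot all_order all_algebra.
From mathcomp Require Import all_classical all_reals all_analysis.
From mathcomp Require mpoly.
Set Implicit Arguments. Unset Strict Implicit. Unset Printing Implicit Defensive.
Import Order.TTheory GRing.Theory Num.Theory.
Import numFieldNormedType.Exports.
Local Open Scope classical_set_scope.
Local Open Scope ring_scope.

Section Curve.
Variable R : realType.
Variable m : nat.   (* m = n - 1 : number of equations; points of R^n live in 'cV_(m+1) *)

Definition polyEval (C : 'I_m -> mpoly.mpoly (m + 1) rat) (x : 'cV[R]_(m + 1))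
  : 'cV[R]_m :=
  \col_i mpoly.mmap (fun q : rat => ratr q) (fun j => x j 0) (C i).

Definition fullJac (F : 'cV[R]_(m + 1) -> 'cV[R]_m) (x : 'cV[R]_(m + 1))
  : 'M[R]_(m, m + 1) :=
  \matrix_(i, j) 'D_(delta_mx j 0 : 'cV[R]_(m + 1)) (fun z => F z i 0) x.

Definition regular_curve (F : 'cV[R]_(m + 1) -> 'cV[R]_m) : Prop :=
  forall x, F x = 0 -> \rank (fullJac F x) = m.

(* Transformed curve  \hat C(X) = U^* C(V X)  (real matrices: U^* = U^T). *)
Definition transformed (F : 'cV[R]_(m + 1) -> 'cV[R]_m)
  (U : 'M[R]_m) (V : 'M[R]_(m + 1)) (x : 'cV[R]_(m + 1)) : 'cV[R]_m :=
  U^T *m F (V *m x).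

Definition slice (F : 'cV[R]_(m + 1) -> 'cV[R]_m) (a : R) (y : 'cV[R]_m)
  : 'cV[R]_m := F (col_mx y (a%:M)).

Definition sliceJac (F : 'cV[R]_(m + 1) -> 'cV[R]_m) (a : R) (y : 'cV[R]_m)
  : 'M[R]_m :=
  \matrix_(i, j) 'D_(delta_mx j 0 : 'cV[R]_m) (fun z => slice F a z i 0) y.

Definition xmn (x : 'cV[R]_(m + 1)) : 'cV[R]_m := usubmx x.
Definition xlast (x : 'cV[R]_(m + 1)) : R := dsubmx x 0 0.

Definition inB (b : 'cV[R]_m) : Prop := forall i, `|b i 0| <= 1.
Definition supnorm (v : 'cV[R]_m) : R := \big[Num.max/0]_i `|v i 0|.

(* KrawczykTest(F, Y, s, A, rho) with an interval of slice values T and a set of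
   points Y: the (exact range of the) Krawczyk expression
   -1/s A F_t(y) + (I - A JF_t(y + sB)) B  has norm < rho.  Since the interval
   evaluation encloses this range, the test returning True implies this. *)
Definition KrawczykTest (F : 'cV[R]_(m + 1) -> 'cV[R]_m) (T : set R)
  (Y : set 'cV[R]_m) (s : R) (A : 'M[R]_m) (rho : R) : Prop :=
  forall t y b' b, T t -> Y y -> inB b' -> inB b ->
    supnorm (- (s^-1 *: (A *m slice F t y))
             + (1%:M - A *m sliceJac F t (y + s *: b')) *m b) < rho.

Definition approx_solution (F : 'cV[R]_(m + 1) -> 'cV[R]_m)
  (x : 'cV[R]_(m + 1)) (tau : R) : Prop :=
  exists (A : 'M[R]_m) (r : R), A \in unitmx /\ 0 < r /\
    forall b' b, inB b' -> inB b ->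
      forall i, `|(- (A *m slice F (xlast x) (xmn x))
         + (1%:M - A *m sliceJac F (xlast x) (xmn x + r *: b')) *m (r *: b)) i 0|
        <= r * tau.

Definition extPredictor (X : R -> 'cV[R]_m) (y0 : 'cV[R]_m) (eta : R) : 'cV[R]_m :=
  if eta < 0 then y0 else X eta.

End Curve.

From HB Require Import structures.
From mathcomp Require Import all_boot all_order all_algebra.
From mathcomp Require Import all_classical all_reals all_analysis.
From mathcomp Require mpoly.
Import Order.TTheory GRing.Theory Num.Theory.
Import numFieldNormedType.Exports.
Local Open Scope classical_set_scope.
Local Open Scope ring_scope.

(* The Krawczyk test on exit of the step-size loop ranges over slice values
   and predictor points that contain the updated point (X(h), x_n + h), so the
   Krawczyk bound holds there for A and r; multiplied by r it is the inclusion
   defining a tau-approximate solution.  A is invertible: if u A = 0 with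
   u != 0, testing the bound against the box vector sign(u) gives
   |u|_1 <= |u|_1 * tau < |u|_1. *)

Section Krawczyk.
Variables (R : realType) (m : nat).
Implicit Types (A M : 'M[R]_m) (u : 'rV[R]_m) (b c w y : 'cV[R]_m) (r tau : R).

Lemma supnorm_ge_coord w i : `|w i 0| <= supnorm w.
Proof. by rewrite /supnorm (bigD1 i) //= le_max lexx. Qed.

Lemma row_mul_le_supnorm u w :
  `|(u *m w) 0 0| <= (\sum_j `|u 0 j|) * supnorm w.
Proof.
rewrite mxE mulr_suml; apply: (le_trans (ler_norm_sum _ _ _)).
apply: ler_sum => j _; rewrite normrM ler_wpM2l //.
exact: supnorm_ge_coord.
Qed.

Definition sign_col u : 'cV[R]_m := \col_i Num.sg (u 0 i).

Lemma inB_sign_col u : inB (sign_col u).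
Proof. by move=> i; rewrite mxE normr_sg; case: (_ == 0). Qed.

Lemma mul_sign_col u : (u *m sign_col u) 0 0 = \sum_j `|u 0 j|.
Proof. by rewrite mxE; apply: eq_bigr => j _; rewrite mxE mulrC -normrEsg. Qed.

Lemma norm1_row_gt0 u : u != 0 -> 0 < \sum_j `|u 0 j|.
Proof.
move=> u_neq0; have [j uj_neq0] : exists j, u 0 j != 0.
  apply/existsP; move: u_neq0; apply: contraR; rewrite negb_exists => /forallP uj0.
  by apply/eqP/matrixP => i j; rewrite (ord1 i) mxE; apply/eqP/negPn/uj0.
rewrite (bigD1 j) //= ltr_pwDl ?normr_gt0 //.
exact: sumr_ge0.
Qed.

Lemma unitmx_of_box_contraction A M c :
  (forall b, inB b -> supnorm (A *m c + (1%:M - A *m M) *m b) < 1) ->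
  A \in unitmx.
Proof.
move=> contr; rewrite unitmxE unitfE; apply/negP => /det0P [u u_neq0 uA0].
pose w := A *m c + (1%:M - A *m M) *m sign_col u.
have uwE : (u *m w) 0 0 = \sum_j `|u 0 j|.
  rewrite /w mulmxDr !mulmxA uA0 mul0mx add0r mulmxBr mulmx1 mulmxA uA0.
  by rewrite mul0mx subr0 mul_sign_col.
have := row_mul_le_supnorm u w; rewrite uwE ger0_norm ?sumr_ge0 //.
apply/negP; rewrite -ltNge -{2}(mulr1 (\sum_j _)) ltr_pM2l ?norm1_row_gt0 //.
exact/contr/inB_sign_col.
Qed.

Lemma xmn_col_mx y (a : R) : xmn (col_mx y a%:M) = y.
Proof. exact: col_mxKu. Qed.

Lemma xlast_col_mx y (a : R) : xlast (col_mx y a%:M) = a.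
Proof. by rewrite /xlast col_mxKd mxE eqxx mulr1n. Qed.

Variable F : 'cV[R]_(m + 1) -> 'cV[R]_m.

Definition krawczyk (t : R) (y : 'cV[R]_m) r A (b' b : 'cV[R]_m) : 'cV[R]_m :=
  - (r^-1 *: (A *m slice F t y)) + (1%:M - A *m sliceJac F t (y + r *: b')) *m b.

Lemma krawczyk_scale t y r A b' b : r != 0 ->
  - (A *m slice F t y) + (1%:M - A *m sliceJac F t (y + r *: b')) *m (r *: b)
  = r *: krawczyk t y r A b' b.
Proof.
move=> r_neq0; rewrite scalerDr scalerN scalerA mulfV // scale1r.
by rewrite -scalemxAr.
Qed.

Lemma approx_solution_of_krawczyk x r A tau : 0 < r -> tau <= 1 ->
  (forall b' b, inB b' -> inB b ->
     supnorm (krawczyk (xlast x) (xmn x) r A b' b) < tau) ->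
  approx_solution F x tau.
Proof.
move=> r_gt0 tau_le1 bound; exists A, r; split; last split => //.
- apply: (@unitmx_of_box_contraction _ (sliceJac F (xlast x) (xmn x + r *: 0))
           (- (r^-1 *: slice F (xlast x) (xmn x)))) => b bB.
  rewrite mulmxN -scalemxAr; apply: lt_le_trans tau_le1; apply: bound => // i.
  by rewrite mxE normr0 ler01.
- move=> b' b b'B bB i; rewrite krawczyk_scale ?gt_eqF // mxE normrM.
  rewrite gtr0_norm // ler_pM2l //.
  exact: le_trans (supnorm_ge_coord _ i) (ltW (bound _ _ b'B bB)).
Qed.

End Krawczyk.

Theorem mainTheorem3 (R : realType) (m : nat)
  (C : 'I_m -> mpoly.mpoly (m + 1) rat)
  (U : 'M[R]_m) (V : 'M[R]_(m + 1))
  (xhat : 'cV[R]_(m + 1)) (r h rho tau : R) (A : 'M[R]_m)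
  (X : R -> 'cV[R]_m) :
  regular_curve (@polyEval R m C) ->
  U *m U^T = 1%:M -> V *m V^T = 1%:M ->
  0 < r -> 0 < h -> 0 < rho -> rho <= 2^-1 -> 2^-1 < tau -> tau < 1 ->
  {within [set eta : R | 0 <= eta], continuous X} ->
  X 0 = xmn xhat ->
  KrawczykTest (transformed (@polyEval R m C) U V)
    [set t | xlast xhat - r * rho <= t <= xlast xhat + h]
    [set extPredictor X (xmn xhat) eta | eta in [set e | - (r * rho) <= e <= h]]
    r A tau ->
  approx_solution (transformed (@polyEval R m C) U V)
    (col_mx (X h) ((xlast xhat + h)%:M)) tau.
Proof.
move=> _ _ _ r_gt0 h_gt0 rho_gt0 _ _ tau_lt1 _ _ test.
have neg_le_h : - (r * rho) <= h.
  by rewrite (le_trans _ (ltW h_gt0)) // oppr_le0 ltW ?mulr_gt0.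
apply: (@approx_solution_of_krawczyk R m _ _ r A tau r_gt0 (ltW tau_lt1)) => b' b b'B bB.
rewrite xmn_col_mx xlast_col_mx.
apply: test b'B bB.
- by rewrite /= lexx andbT lerD2l.
- exists h; first by rewrite /= neg_le_h lexx.
  by rewrite /extPredictor ltNge ltW.
Qed.
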